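(* Let $C$ be an $[n,k,d]$ and $C'$ an $[n',k',d']$ linear code over $\mathbb{F}_q$, let $x \in C \times C'$, $e \in \mathbb{F}_q^{n\times n'}$, $y = x+e$, and suppose $2\sum_{j=1}^{n'} \min\{w(e_j), d\} < d\,d'$. With $\hat{x}$, $\alpha$, $I_E$ and the sets $E_0,\dots,E_J$ as in the context, there exists an index $k \in \{0,1,\dots,J-1\}$ (the same for all rows) such that $$2\,|I_E \setminus E_k| + |E_k| < d',$$ and hence, for every row index $i \in [n]$, $2\, w_{E_k}(\hat{x}^i - x^i) + |E_k| < d'$; that is, an error-and-erasure decoder for $C'$ with erasure set $E_k$ decodes every row $\hat{x}^i$ to $x^i$.
   Context: The product code $C \times C'$ consists of the $n \times n'$ matrices over $\mathbb{F}_q$ all of whose columns lie in $C$ and all of whose rows lie in $C'$. For a matrix $b$, $b_j$ denotes its $j$-th column and $b^i$ its $i$-th row; $w(\cdot)$ is Hamming weight; for $v \in \mathbb{F}_q^{n'}$ and $E \subseteq [n']$, $w_E(v)$ is the number of $j \notin E$ with $v_j \neq 0$. Let $t = \lfloor (d-1)/2 \rfloor$. Column decoding: each column $y_j$ ($j \in [n']$) is decoded by a bounded-distance decoder for $C$, which returns the unique codeword of $C$ within Hamming distance $t$ of $y_j$ if one exists and otherwise declares failure. On success with output $\hat{x}_j$ put $\alpha_j = (d - 2w(y_j - \hat{x}_j))/d$; on failure put $\hat{x}_j = y_j$ and $\alpha_j = 0$. Let $\hat{x}$ be the matrix with columns $\hat{x}_j$, and $I_E \subseteq [n']$ the set of $j$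 for which decoding failed or $\hat{x}_j \neq x_j$. Let $a_1 < a_2 < \dots < a_J$ be the distinct values among $\alpha_1,\dots,\alpha_{n'}$; set $E_0 = \emptyset$ and $E_k = \{ j \in [n'] : \alpha_j \le a_k\}$ for $k \in [J]$. An error-and-erasure decoder for $C'$ with erasure set $E$ returns the unique codeword $c$ with $2w_E(r-c) + |E| < d'$ if it exists. *)

From HB Require Import structures.
From mathcomp Require Import all_boot all_order all_algebra.
Set Implicit Arguments. Unset Strict Implicit. Unset Printing Implicit Defensive.
Import Order.TTheory GRing.Theory Num.Theory.
Local Open Scope ring_scope.

Section Defs.
Variable F : finFieldType.

Definition wt (m : nat) (v : 'rV[F]_m) : nat := #|[set i | v 0 i != 0]|.

Definition wtE (m : nat) (E : {set 'I_m}) (v : 'rV[F]_m) : nat :=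
  #|[set j | (j \notin E) && (v 0 j != 0)]|.

Definition min_dist (m : nat) (C : {vspace 'rV[F]_m}) (d : nat) : Prop :=
  (exists2 c, c \in C & (c != 0) && (wt c == d)) /\
  (forall c, c \in C -> c != 0 -> (d <= wt c)%N).

Definition colv (n n' : nat) (b : 'M[F]_(n, n')) (j : 'I_n') : 'rV[F]_n :=
  (col j b)^T.

(* bounded-distance decoder for C with radius t = (d-1)/2:
   Some c for the (unique) codeword within distance t, None = failure *)
Definition bdd_dec (n : nat) (C : {vspace 'rV[F]_n}) (d : nat) (v : 'rV[F]_n)
  : option 'rV[F]_n :=
  [pick c | (c \in C) && (wt (v - c) <= (d.-1)./2)%N].

Definition xhat_col (n n' : nat) (C : {vspace 'rV[F]_n}) (d : nat)
  (y : 'M[F]_(n, n')) (j : 'I_n') : 'rV[F]_n :=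
  if bdd_dec C d (colv y j) is Some c then c else colv y j.

Definition xhat (n n' : nat) (C : {vspace 'rV[F]_n}) (d : nat)
  (y : 'M[F]_(n, n')) : 'M[F]_(n, n') :=
  \matrix_(i < n, j < n') xhat_col C d y j 0 i.

Definition alpha (n n' : nat) (C : {vspace 'rV[F]_n}) (d : nat)
  (y : 'M[F]_(n, n')) (j : 'I_n') : rat :=
  if bdd_dec C d (colv y j) is Some c then
    ((d%:R - 2%:R * (wt (colv y j - c))%:R) / d%:R)
  else 0.

Definition IE (n n' : nat) (C : {vspace 'rV[F]_n}) (d : nat)
  (x y : 'M[F]_(n, n')) : {set 'I_n'} :=
  [set j | (bdd_dec C d (colv y j) == None) || (xhat_col C d y j != colv x j)].

Definition alpha_vals (n n' : nat) (C : {vspace 'rV[F]_n}) (d : nat)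
  (y : 'M[F]_(n, n')) : seq rat :=
  sort (fun a b : rat => a <= b) (undup [seq alpha C d y j | j <- enum 'I_n']).

Definition Jnum (n n' : nat) (C : {vspace 'rV[F]_n}) (d : nat)
  (y : 'M[F]_(n, n')) : nat := size (alpha_vals C d y).

(* E_0 = empty, E_k = {j | alpha_j <= a_k} for 1 <= k <= J *)
Definition Eset (n n' : nat) (C : {vspace 'rV[F]_n}) (d : nat)
  (y : 'M[F]_(n, n')) (k : nat) : {set 'I_n'} :=
  if k is k'.+1 then [set j | alpha C d y j <= nth 0 (alpha_vals C d y) k']
  else set0.

End Defs.

From HB Require Import structures.
From mathcomp Require Import all_boot all_order all_algebra.
From mathcomp Require Import ring lra zify.
Import Order.TTheory GRing.Theory Num.Theory.
Local Open Scope ring_scope.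

Set Implicit Arguments. Unset Strict Implicit. Unset Printing Implicit Defensive.

(* Give column j the sign s_j = -1 if j is in I_E and +1 otherwise.  Bounded-distance
   decoding gives d - 2 min(w(e_j), d) <= d s_j alpha_j for every column, so the weight
   hypothesis yields sum_j s_j alpha_j > n' - d'.  As 0 <= alpha_j <= 1, Abel summation over
   the levels of alpha produces a level a = alpha_j0 whose upper tail sum_{alpha_j >= a} s_j
   already exceeds n' - d'.  For the erasure set E = {j | alpha_j < a}, which is one of the
   E_k, this tail equals |E^c \ I_E| - |I_E \ E|, i.e. 2 |I_E \ E| + |E| < d'.  Outside E
   the rows of xhat - x are supported in I_E, and two codewords of C' satisfying the
   error-and-erasure bound coincide by the triangle inequality. *)

Section Threshold.
Variables (I : finType) (R : realDomainType) (a s : I -> R) (K : R).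
Hypothesis K_ge0 : 0 <= K.

(* Abel summation: peel off the lowest level m of [a] on [S], writing
   [a j - c = (m - c) + (a j - m)], and recurse on the strictly higher levels. *)
Lemma sum_mul_le_of_upper_sums_le (S : {set I}) (c M : R) :
  c <= M -> (forall j, j \in S -> c <= a j <= M) ->
  (forall j0, j0 \in S -> \sum_(j in S | a j0 <= a j) s j <= K) ->
  \sum_(j in S) s j * (a j - c) <= K * (M - c).
Proof.
elim: {S}#|S| {-2}S (leqnn #|S|) c => [|N IH] S cardS c cM aS sumS.
  move: cardS; rewrite leqn0 cards_eq0 => /eqP ->.
  by rewrite big_set0 mulr_ge0 // subr_ge0.
have [->|[j1 j1S]] := set_0Vmem S; first by rewrite big_set0 mulr_ge0 // subr_ge0.
have [j0 j0S min_j0] := arg_minP a j1S; set m := a j0.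
have /andP[cm mM] := aS _ j0S.
set S' := [set j in S | m < a j].
have S'S : S' \proper S.
  apply/properP; split; first by apply/subsetP => j; rewrite inE => /andP[].
  by exists j0 => //; rewrite inE ltxx andbF.
have split_sum : \sum_(j in S) s j * (a j - c) =
    (m - c) * \sum_(j in S) s j + \sum_(j in S') s j * (a j - m).
  have -> : \sum_(j in S') s j * (a j - m) = \sum_(j in S | m < a j) s j * (a j - m).
    by apply: eq_bigl => j; rewrite inE.
  rewrite mulr_sumr !(bigID (fun j => m < a j) (mem S)) /= [RHS]addrAC.
  congr (_ + _); first by rewrite -big_split; apply: eq_bigr => j _ /=; ring.
  apply: eq_bigr => j /andP[jS]; rewrite -leNgt => ajm.
  by rewrite (@le_anti _ _ (a j) m) ?ajm ?min_j0 // mulrC.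
have low : (m - c) * \sum_(j in S) s j <= (m - c) * K.
  rewrite ler_wpM2l ?subr_ge0 //; apply: le_trans (sumS _ j0S).
  rewrite le_eqVlt; apply/orP; left; apply/eqP/eq_bigl => j.
  by case: (boolP (j \in S)) => //= /min_j0 ->.
have high : \sum_(j in S') s j * (a j - m) <= K * (M - m).
  apply: IH => //.
  - by rewrite -ltnS; apply: leq_trans (proper_card S'S) cardS.
  - by move=> j; rewrite inE => /andP[/aS /andP[_ ->] /ltW ->].
  move=> j2; rewrite inE => /andP[j2S mj2]; apply: le_trans (sumS _ j2S).
  rewrite le_eqVlt; apply/orP; left; apply/eqP/eq_bigl => j; rewrite inE.
  case: (boolP (j \in S)) => //= _; case: (boolP (a j2 <= a j)) => ?; last by rewrite andbF.
  by rewrite (lt_le_trans mj2).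
rewrite split_sum (_ : K * (M - c) = (m - c) * K + K * (M - m)); first exact: lerD.
ring.
Qed.

Lemma exists_upper_sum_gt :
  (forall j, 0 <= a j <= 1) -> K < \sum_j s j * a j ->
  exists j0, K < \sum_(j | a j0 <= a j) s j.
Proof.
move=> a01 sum_gt; apply/existsP; apply: contraLR sum_gt => /existsPn light.
rewrite -leNgt -[X in _ <= X]mulr1 -[1](subr0 1).
under eq_bigr do rewrite -[a _](subr0 (a _)).
rewrite -big_set /=.
apply: sum_mul_le_of_upper_sums_le => [|j _|j0 _]; [exact: ler01 | exact: a01 |].
by rewrite leNgt (eq_bigl (fun j => a j0 <= a j)) // => j; rewrite inE.
Qed.

End Threshold.

Lemma sum_sign_setC (I : finType) (R : realFieldType) (T B : {set I}) :
  \sum_(j in ~: T) (-1) ^+ (j \in B) =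
    #|~: T :\: B|%:R - #|B :\: T|%:R :> R.
Proof.
rewrite (big_setID B) /= addrC.
rewrite (eq_bigr (fun _ => 1)) => [|j]; last by rewrite inE => /andP[/negbTE ->].
rewrite [X in _ + X](eq_bigr (fun _ => -1)) => [|j]; last by rewrite inE => /andP[_ ->].
by rewrite !sumr_const -mulNrn setIC -setDE.
Qed.

Lemma erasures_lt_of_sum_sign (I : finType) (R : realFieldType) (T B : {set I}) d' :
  #|I|%:R - d'%:R < \sum_(j in ~: T) (-1) ^+ (j \in B) :> R ->
  (2 * #|B :\: T| + #|T| < d')%N.
Proof.
have /(congr1 (GRing.natmul (1 : R))) : #|I| = (#|B :\: T| + #|~: T :\: B| + #|T|)%N.
  by rewrite -(cardsC T) addnC -(cardsID B (~: T)) setIC -setDE addnC.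
by rewrite sum_sign_setC -(ltr_nat R) !natrD => ->; lra.
Qed.

Section HammingWeight.
Variable F : finFieldType.

Lemma wtE0 m (v : 'rV[F]_m) : wtE set0 v = wt v.
Proof. by apply: eq_card => j; rewrite !inE. Qed.

Lemma wtE_triangle m (E : {set 'I_m}) (u v w : 'rV[F]_m) :
  (wtE E (u - w) <= wtE E (u - v) + wtE E (v - w))%N.
Proof.
apply: leq_trans (leq_card_setU _ _) ; apply: subset_leq_card.
apply/subsetP => j; rewrite !inE !mxE => /andP[-> uw] /=.
apply: contraR uw; rewrite negb_or !negbK => /andP[/eqP uv /eqP vw].
by rewrite -(subrK (v 0 j) (u 0 j)) -addrA uv vw add0r.
Qed.

Lemma wtE_subC m (E : {set 'I_m}) (u v : 'rV[F]_m) : wtE E (u - v) = wtE E (v - u).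
Proof. by apply: eq_card => j; rewrite !inE !mxE -opprB oppr_eq0. Qed.

Lemma wt_le_wtE m (E : {set 'I_m}) (v : 'rV[F]_m) : (wt v <= wtE E v + #|E|)%N.
Proof.
apply: leq_trans (leq_card_setU _ _); apply: subset_leq_card.
by apply/subsetP => j; rewrite !inE => ->; case: (j \in E).
Qed.

Lemma wt_triangle m (u v w : 'rV[F]_m) : (wt (u - w) <= wt (u - v) + wt (v - w))%N.
Proof. by rewrite -!(wtE0 (_ - _)) wtE_triangle. Qed.

Lemma wt_subC m (u v : 'rV[F]_m) : wt (u - v) = wt (v - u).
Proof. by rewrite -!(wtE0 (_ - _)) wtE_subC. Qed.

Lemma wt_le_size m (v : 'rV[F]_m) : (wt v <= m)%N.
Proof. by rewrite -[m in (_ <= m)%N]card_ord max_card. Qed.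

Lemma min_dist_le_size m (C : {vspace 'rV[F]_m}) d : min_dist C d -> (d <= m)%N.
Proof. by case=> [[c _ /andP[_ /eqP <-]] _]; apply: wt_le_size. Qed.

Lemma min_dist_le_wt_sub m (C : {vspace 'rV[F]_m}) d u v :
  min_dist C d -> u \in C -> v \in C -> u != v -> (d <= wt (u - v))%N.
Proof. by case=> _ dC uC vC uv; rewrite dC ?memvB ?subr_eq0. Qed.

Lemma erasure_decoding_unique m (C : {vspace 'rV[F]_m}) d (E : {set 'I_m}) r u v :
  min_dist C d -> u \in C -> v \in C ->
  (2 * wtE E (r - u) + #|E| < d)%N -> (2 * wtE E (r - v) + #|E| < d)%N -> u = v.
Proof.
move=> dC uC vC ru rv; case: (eqVneq u v) => // uv; exfalso.
have : (d <= wtE E (r - u) + wtE E (r - v) + #|E|)%N.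
  apply: leq_trans (min_dist_le_wt_sub dC uC vC uv) (leq_trans (wt_le_wtE E _) _).
  by rewrite leq_add2r (wtE_subC E r u) wtE_triangle.
by move: ru rv; move: (wtE E (r - u)) (wtE E (r - v)) => a b; lia.
Qed.

End HammingWeight.

Lemma double_radius_lt d : (0 < d)%N -> (2 * (d.-1)./2 < d)%N.
Proof. by rewrite -divn2; lia. Qed.

Lemma radius_lt_double_ge d w : ((d.-1)./2 < w)%N -> (d <= 2 * w)%N.
Proof. by rewrite -divn2; lia. Qed.

Section BoundedDistanceDecoding.
Variables (F : finFieldType) (n : nat) (C : {vspace 'rV[F]_n}) (d : nat).

Lemma bdd_decP v c :
  bdd_dec C d v = Some c -> c \in C /\ (wt (v - c) <= (d.-1)./2)%N.
Proof. by rewrite /bdd_dec; case: pickP => // c' /andP[? ?] [<-]. Qed.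

Lemma bdd_dec_None v c :
  bdd_dec C d v = None -> c \in C -> ((d.-1)./2 < wt (v - c))%N.
Proof.
by move=> + cC; rewrite /bdd_dec ltnNge; case: pickP => // /(_ c) /=; rewrite cC /= => ->.
Qed.

Lemma alpha_ge0_le1 n' (y : 'M[F]_(n, n')) j : (0 < d)%N -> 0 <= alpha C d y j <= 1.
Proof.
rewrite /alpha => d_gt0; case dec: bdd_dec => [c|] //=.
have [_ w_le] := bdd_decP dec.
have : (2 * wt (colv y j - c) < d)%N.
  by apply: leq_ltn_trans (double_radius_lt d_gt0); rewrite leq_mul2l w_le orbT.
rewrite -(ltr_nat rat) natrM => lt_d; have d_pos : (0 : rat) < d%:R by rewrite ltr0n.
have w_ge0 : (0 : rat) <= (wt (colv y j - c))%:R := ler0n _ _.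
by rewrite divr_ge0 ?ler_pdivrMr ?mul1r ?(ltW d_pos) //=; lra.
Qed.

End BoundedDistanceDecoding.

Section ReliabilityLevels.
Variables (F : finFieldType) (n n' : nat) (C : {vspace 'rV[F]_n}) (d : nat).
Variable y : 'M[F]_(n, n').

Local Notation vals := (alpha_vals C d y).

Lemma alpha_vals_lt_sorted : sorted <%O vals.
Proof. by rewrite sort_lt_sorted undup_uniq. Qed.

Lemma index_alpha_lt_Jnum j : (index (alpha C d y j) vals < Jnum C d y)%N.
Proof. by rewrite index_mem mem_sort mem_undup map_f ?mem_enum. Qed.

Lemma Eset_index_alpha j0 :
  Eset C d y (index (alpha C d y j0) vals) = [set j | alpha C d y j < alpha C d y j0].
Proof.
have nth_alpha j : nth 0 vals (index (alpha C d y j) vals) = alpha C d y j.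
  by rewrite nth_index // -index_mem index_alpha_lt_Jnum.
apply/setP => j.
rewrite inE -[alpha _ _ _ j in RHS]nth_alpha -[alpha _ _ _ j0 in RHS]nth_alpha.
rewrite (lt_sorted_ltn_nth 0 alpha_vals_lt_sorted) ?inE ?index_alpha_lt_Jnum //.
have := index_alpha_lt_Jnum j0; rewrite /Eset.
case: (index _ vals) => [|k] k_lt; first by rewrite in_set0 ltn0.
rewrite inE ltnS -[alpha _ _ _ j in LHS]nth_alpha.
by rewrite (lt_sorted_leq_nth 0 alpha_vals_lt_sorted) ?inE ?index_alpha_lt_Jnum // ltnW.
Qed.

End ReliabilityLevels.

Lemma wtE_row_xhat_le (F : finFieldType) n n' (C : {vspace 'rV[F]_n}) d
    (x y : 'M[F]_(n, n')) (T : {set 'I_n'}) i :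
  (wtE T (row i (xhat C d y) - row i x) <= #|IE C d x y :\: T|)%N.
Proof.
apply/subset_leq_card/subsetP => j; rewrite !inE !mxE => /andP[-> /=].
by apply: contraR; rewrite negb_or negbK => /andP[_ /eqP ->]; rewrite !mxE subrr.
Qed.

Lemma colvD (F : finFieldType) n n' (a b : 'M[F]_(n, n')) j :
  colv (a + b) j = colv a j + colv b j.
Proof. by apply/rowP => i; rewrite !mxE. Qed.

Section ColumnDecoding.
Variables (F : finFieldType) (n n' : nat) (C : {vspace 'rV[F]_n}) (d : nat).
Variables (x e : 'M[F]_(n, n')).
Hypotheses (hCd : min_dist C d) (d_gt0 : (0 < d)%N).
Hypothesis hxcol : forall j, colv x j \in C.

Local Notation y := (x + e).

Lemma reliability_lower_bound j :
  d%:R - 2%:R * (minn (wt (colv e j)) d)%:R <=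
    d%:R * ((-1) ^+ (j \in IE C d x y) * alpha C d y j) :> rat.
Proof.
have ye : colv y j - colv x j = colv e j by rewrite colvD addrC addKr.
rewrite /alpha /IE inE /xhat_col.
case dec: (bdd_dec C d (colv y j)) => [c|] /=; last first.
  have := radius_lt_double_ge (bdd_dec_None dec (hxcol j)); rewrite ye => e_large.
  by rewrite mulr0 subr_le0 -natrM ler_nat; lia.
have [cC w_le] := bdd_decP dec; set w := wt (colv y j - c) in w_le *.
have w_lt : (2 * w < d)%N.
  by apply: leq_ltn_trans (double_radius_lt d_gt0); rewrite leq_mul2l w_le orbT.
have d_neq0 : (d%:R : rat) != 0 by rewrite pnatr_eq0 -lt0n.
rewrite mulrCA [d%:R * _]mulrC divfK //.
have [c_eq|c_neq] := eqVneq c (colv x j).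
  have e_wt : wt (colv e j) = w by rewrite /w c_eq ye.
  have min_w : minn (wt (colv e j)) d = w by rewrite e_wt; apply/minn_idPl; lia.
  by rewrite min_w expr0 mul1r.
have d_le : (d <= w + minn (wt (colv e j)) d)%N.
  have tri := wt_triangle c (colv y j) (colv x j).
  rewrite (wt_subC c (colv y j)) ye -/w in tri.
  have := leq_trans (min_dist_le_wt_sub hCd cC (hxcol j) c_neq) tri.
  by rewrite addn_minr leq_min leq_addl andbT.
rewrite -(ler_nat rat) natrD in d_le; rewrite /= mulN1r; lra.
Qed.

Lemma reliability_sum_gt d' :
  (2 * (\sum_(j < n') minn (wt (colv e j)) d) < d * d')%N ->
  n'%:R - d'%:R < \sum_j (-1) ^+ (j \in IE C d x y) * alpha C d y j :> rat.
Proof.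
rewrite -(ltr_nat rat) !natrM natr_sum => hw.
have d_pos : (0 : rat) < d%:R by rewrite ltr0n.
rewrite -(ltr_pM2l d_pos) mulr_sumr.
apply: lt_le_trans (ler_sum _ (fun j _ => reliability_lower_bound j)).
by rewrite sumrB sumr_const card_ord -mulr_sumr -mulr_natr mulrBr; lra.
Qed.

End ColumnDecoding.

Unset Implicit Arguments.
Set Strict Implicit.

Theorem mainTheorem3 (F : finFieldType) (n n' k k' d d' : nat)
  (C : {vspace 'rV[F]_n}) (C' : {vspace 'rV[F]_n'})
  (hCk : \dim C = k) (hCd : min_dist C d)
  (hC'k : \dim C' = k') (hC'd : min_dist C' d')
  (x e : 'M[F]_(n, n'))
  (hxcol : forall j : 'I_n', colv x j \in C)
  (hxrow : forall i : 'I_n, row i x \in C')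
  (hw : (2 * (\sum_(j < n') minn (wt (colv e j)) d) < d * d')%N) :
  let y := x + e in
  exists2 kk : nat, (kk < Jnum C d y)%N &
    [/\ (2 * #|IE C d x y :\: Eset C d y kk| + #|Eset C d y kk| < d')%N,
        forall i : 'I_n,
          (2 * wtE (Eset C d y kk) (row i (xhat C d y) - row i x)
             + #|Eset C d y kk| < d')%N
      & forall (i : 'I_n) (c : 'rV[F]_n'), c \in C' ->
          (2 * wtE (Eset C d y kk) (row i (xhat C d y) - c)
             + #|Eset C d y kk| < d')%N -> c = row i x].
Proof.
move=> y.
have d_gt0 : (0 < d)%N by rewrite lt0n; apply: contraTneq hw => ->; rewrite mul0n.
have K_ge0 : (0 : rat) <= n'%:R - d'%:R by rewrite subr_ge0 ler_nat (min_dist_le_size hC'd).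
have [j0 heavy] := exists_upper_sum_gt K_ge0 (fun j => alpha_ge0_le1 C y j d_gt0)
  (reliability_sum_gt hCd d_gt0 hxcol hw).
exists (index (alpha C d y j0) (alpha_vals C d y)); first exact: index_alpha_lt_Jnum.
rewrite Eset_index_alpha; set T := [set j | _ < _].
have erasures : (2 * #|IE C d x y :\: T| + #|T| < d')%N.
  apply: (@erasures_lt_of_sum_sign _ rat); rewrite card_ord.
  by under eq_bigl do rewrite !inE -leNgt.
have rows_ok i : (2 * wtE T (row i (xhat C d y) - row i x) + #|T| < d')%N.
  by apply: leq_ltn_trans erasures; rewrite leq_add2r leq_mul2l wtE_row_xhat_le orbT.
by split=> // i c cC c_ok; apply: erasure_decoding_unique hC'd cC (hxrow i) c_ok (rows_ok i).
Qed.
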